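(* Let $W$ be an outcome satisfying UPRF. Then $W$ satisfies $\frac{3+\sqrt{17}}{2}$-proportional fairness, satisfies $3$-individual fairness (when $N\subseteq C$), and is in the $\left(\gamma,\frac{3\gamma}{\gamma-1}\right)$-transferable core for every $\gamma>1$.
   Context: Let $(\mathcal X,d)$ be a metric space, $N=[n]$ a set of agents and $C$ a set of candidates located in $\mathcal X$, $k\in\mathbb N^+$; an outcome is $W\subseteq C$ with $|W|\le k$; $B(i,r)=\{x\in\mathcal X:d(i,x)\le r\}$; $d(i,W)=\min_{c\in W}d(i,c)$. UPRF: there are no $\ell\in\mathbb N$, no $N'\subseteq N$ with $|N'|\ge\ell n/k$, and no $y\in\mathbb R$ with $\max_{i,i'\in N'}d(i,i')\le y$ and $|\bigcup_{i\in N'}B(i,y)\cap W|<\ell$. $\alpha$-proportional fairness: there is no $N'\subseteq N$ with $|N'|\ge n/k$ and $c\in C\setminus W$ with $\alpha\,d(i,c)<d(i,W)$ for all $i\in N'$. $\beta$-individual fairness (defined only for instances with $N\subseteq C$): $d(i,W)\le\beta\,r(i)$ for all $i\in N$, where $r(i)=\min\{r: |B(i,r)\cap N|\ge n/k\}$. $(\gamma,\alpha)$-transferable core: there is no $N'\subseteq N$ and $c\in C\setminus W$ with $|N'|\ge\gamma n/k$ and $\alpha\sum_{i\in N'}d(i,c)<\sum_{i\in N'}d(i,W)$. *)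

From HB Require Import structures.
From mathcomp Require Import all_boot all_order all_algebra.
From mathcomp Require Import reals constructive_ereal.
Set Implicit Arguments. Unset Strict Implicit. Unset Printing Implicit Defensive.
Import Order.TTheory GRing.Theory Num.Theory.
Local Open Scope ring_scope.

Definition is_metric (R : realType) (X : Type) (d : X -> X -> R) : Prop :=
  [/\ forall x y, 0 <= d x y,
      forall x y, d x y = 0 <-> x = y,
      forall x y, d x y = d y x &
      forall x y z, d x z <= d x y + d y z].

Section Election.
Variables (R : realType) (X : Type) (d : X -> X -> R).
(* n agents, located by [loc]; candidates are the elements of a finite type
   [Cand], located by [cl]. *)
Variables (n k : nat) (Cand : finType) (loc : 'I_n -> X) (cl : Cand -> X).

(* d(i, W) = min_{c in W} d(i,c), with the convention min over the empty set = +oo *)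
Definition distW (i : 'I_n) (W : {set Cand}) : \bar R :=
  \big[Order.min/+oo%E]_(c in W) (d (loc i) (cl c))%:E.

Definition UPRF (W : {set Cand}) : Prop :=
  ~ exists (l : nat) (N' : {set 'I_n}) (y : R),
      [/\ (l%:R * n%:R / k%:R <= #|N'|%:R :> R),
          (forall i i', i \in N' -> i' \in N' -> d (loc i) (loc i') <= y) &
          (#|[set c in W | [exists i in N', (d (loc i) (cl c) <= y)%R]]| < l)%N].

Definition prop_fair (alpha : R) (W : {set Cand}) : Prop :=
  ~ exists (N' : {set 'I_n}) (c : Cand),
      [/\ (n%:R / k%:R <= #|N'|%:R :> R), c \notin W &
          forall i, i \in N' -> ((alpha * d (loc i) (cl c))%:E < distW i W)%E].

Definition ball_big (i : 'I_n) (r : R) : bool :=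
  n%:R / k%:R <= #|[set j : 'I_n | (d (loc i) (loc j) <= r)%R]|%:R :> R.

(* r(i) = min { r : |B(i,r) ∩ N| >= n/k } : [is_r i r] says r is this minimum *)
Definition is_r (i : 'I_n) (r : R) : Prop :=
  ball_big i r /\ forall r', ball_big i r' -> r <= r'.

(* beta-individual fairness (only meaningful when N ⊆ C) *)
Definition indiv_fair (beta : R) (W : {set Cand}) : Prop :=
  forall i r, is_r i r -> (distW i W <= (beta * r)%:E)%E.

Definition transf_core (gamma alpha : R) (W : {set Cand}) : Prop :=
  ~ exists (N' : {set 'I_n}) (c : Cand),
      [/\ (gamma * n%:R / k%:R <= #|N'|%:R :> R), c \notin W &
          ((alpha * \sum_(i in N') d (loc i) (cl c))%:E
             < \sum_(i in N') distW i W)%E].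
End Election.

From HB Require Import structures.
From mathcomp Require Import all_boot all_order all_algebra.
From mathcomp Require Import reals constructive_ereal.
From mathcomp Require Import ring lra.
Import Order.TTheory GRing.Theory Num.Theory.
Local Open Scope ring_scope.

Set Implicit Arguments. Unset Strict Implicit. Unset Printing Implicit Defensive.

(* UPRF with l = 1 says that a group of at least n/k agents lying within r of
   some point has a winner within 2r of one of its members.  This is applied to
   the whole deviating coalition around the deviating candidate c (proportional
   fairness), to the ball defining r(i) (individual fairness), and to the agents
   of the coalition within tau = S / ((gamma - 1) n/k) of c, where S is the
   coalition's total distance to c; by Markov's inequality at least n/k agents
   are that close (transferable core).  In the last case a farthest-first greedy
   cover serves all but fewer than n/k agents at total cost 2S, and the rest go
   to the winner near c at cost d(i, c) + 3 tau each, so the coalition pays at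
   most 3S + 3S/(gamma - 1). *)

Lemma ler_sum_subset (R : numDomainType) (I : finType) (A B : {set I}) (x : I -> R) :
  B \subset A -> (forall i, i \in A -> 0 <= x i) ->
  \sum_(i in B) x i <= \sum_(i in A) x i.
Proof.
move=> BA x_ge0; rewrite [leRHS](big_setID B) /= (setIidPr BA) lerDl.
by apply: sumr_ge0 => i; rewrite inE => /andP[_ /x_ge0].
Qed.

Lemma markov_card (R : realDomainType) (I : finType) (A : {set I}) (x : I -> R)
    (m t : R) :
  0 <= m -> 0 <= t -> (forall i, i \in A -> 0 <= x i) ->
  \sum_(i in A) x i <= m * t -> #|[set i in A | t < x i]|%:R <= m.
Proof.
move=> m_ge0 t_ge0 x_ge0 sum_le; set B := [set i in A | t < x i].
rewrite leNgt; apply/negP => m_lt.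
have BA : B \subset A by apply/subsetP => i; rewrite inE => /andP[].
have /set0Pn[b Bb] : B != set0.
  by rewrite -card_gt0 -(ltr0n R); exact: le_lt_trans m_lt.
have lt_sumB : #|B|%:R * t < \sum_(i in B) x i.
  rewrite mulr_natl -sumr_const; apply: ltr_sum => [|i]; last by rewrite inE => /andP[].
  by apply/hasP; exists b; rewrite ?mem_index_enum.
have := ler_sum_subset BA x_ge0; have := ler_wpM2r t_ge0 (ltW m_lt); lra.
Qed.

Lemma markov_card_le (R : realDomainType) (I : finType) (A : {set I}) (x : I -> R)
    (m t : R) :
  0 <= m -> 0 <= t -> (forall i, i \in A -> 0 <= x i) ->
  \sum_(i in A) x i <= m * t -> #|A|%:R - m <= #|[set i in A | x i <= t]|%:R.
Proof.
move=> m_ge0 t_ge0 x_ge0 sum_le.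
have := markov_card m_ge0 t_ge0 x_ge0 sum_le.
have := cardsID [set i | x i <= t] A => /(congr1 (fun p => p%:R : R)).
have -> : A :&: [set i | x i <= t] = [set i in A | x i <= t].
  by apply/setP => i; rewrite !inE.
have -> : A :\: [set i | x i <= t] = [set i in A | t < x i].
  by apply/setP => i; rewrite !inE -ltNge andbC.
rewrite natrD; lra.
Qed.

Section UPRF.
Variables (R : realType) (X : Type) (d : X -> X -> R).
Variables (n k : nat) (Cand : finType) (loc : 'I_n -> X) (cl : Cand -> X).
Variable W : {set Cand}.
Hypotheses (d_metric : is_metric d) (W_UPRF : UPRF d k loc cl W).

Local Notation quota := (n%:R / k%:R : R).
Local Notation distW i := (distW d loc cl i W).

Lemma distW_le i w : w \in W -> (distW i <= (d (loc i) (cl w))%:E)%E.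
Proof. by move=> wW; exact: bigmin_le_cond. Qed.

Let d_ge0 x y : 0 <= d x y.
Proof. by case: d_metric. Qed.

Let d_sym x y : d x y = d y x.
Proof. by case: d_metric. Qed.

Let d_triangle x y z : d x z <= d x y + d y z.
Proof. by case: d_metric. Qed.

Lemma UPRF_quota_gt0 : 0 < quota.
Proof.
rewrite ltNge; apply/negP => quota_le0; apply: W_UPRF; exists 1%N, set0, 0.
split=> [|i i'|]; first by rewrite mul1r cards0.
  by rewrite inE.
rewrite ltnS leqn0 cards_eq0 -subset0; apply/subsetP => c.
by rewrite inE => /andP[_ /existsP[i]]; rewrite inE.
Qed.

Lemma UPRF_ball (N' : {set 'I_n}) (c : X) (r : R) :
  quota <= #|N'|%:R -> (forall i, i \in N' -> d (loc i) c <= r) ->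
  exists2 w, w \in W & exists2 i, i \in N' & d (loc i) (cl w) <= 2 * r.
Proof.
move=> N'_big near_c.
set covered := [set w in W | [exists i in N', d (loc i) (cl w) <= 2 * r]].
have [covered0|[w]] := set_0Vmem covered; last first.
  by rewrite inE => /andP[wW /existsP[i /andP[iN' close]]]; exists w => //; exists i.
exfalso; apply: W_UPRF; exists 1%N, N', (2 * r).
split=> [|i i' iN' i'N'|]; first by rewrite mul1r.
  have := d_triangle (loc i) c (loc i'); rewrite (d_sym c).
  have := near_c i iN'; have := near_c i' i'N'; lra.
by rewrite -/covered covered0 cards0.
Qed.

Lemma UPRF_greedy_cover (c : X) (A : {set 'I_n}) :
  exists2 S : {set 'I_n}, S \subset A &
    #|A :\: S|%:R < quota /\
    (\sum_(i in S) distW i <= (2 * \sum_(i in A) d (loc i) c)%:E)%E.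
Proof.
have [m] := ubnP #|A|; elim: m A => // m IH A /ltnSE A_le_m.
have [->|[a0 Aa0]] := set_0Vmem A.
  exists set0; rewrite ?sub0set // setD0 cards0 !big_set0 mulr0.
  by split; [exact: UPRF_quota_gt0|].
have [a Aa a_far] :=
  @arg_maxP _ _ _ a0 (fun i => i \in A) (fun i => d (loc i) c) Aa0.
have [|S SAa [IH_small IH_cost]] := IH (A :\ a).
  by move: A_le_m; rewrite (cardsD1 a A) Aa.
have SA : S \subset A := subset_trans SAa (subsetDl A [set a]).
have sumA :
    \sum_(i in A) d (loc i) c = d (loc a) c + \sum_(i in A :\ a) d (loc i) c.
  exact: big_setD1.
have unserved_a : (A :\: S) :\ a = (A :\ a) :\: S.
  by rewrite setDDl setUC -setDDl.
have aS : a \notin S by apply/negP => /(subsetP SAa); rewrite !inE eqxx.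
have card_unserved : #|A :\: S| = #|(A :\ a) :\: S|.+1.
  by rewrite (cardsD1 a) inE Aa aS unserved_a.
(* Every unserved agent lies within d(a, c) of c, so if they are at least n/k,
   UPRF serves one of them at cost at most 2 d(a, c). *)
case: (ltrP #|A :\: S|%:R quota) => [unserved_small|unserved_big].
  exists S => //; split=> //; apply: (le_trans IH_cost); rewrite lee_fin sumA.
  by rewrite ler_wpM2l // lerDr.
have near_c i : i \in A :\: S -> d (loc i) c <= d (loc a) c.
  by move=> /setDP[iA _]; exact: a_far.
have [w wW [j jrest jw]] := UPRF_ball unserved_big near_c.
have jS : j \notin S by move: jrest => /setDP[].
exists (j |: S); first by rewrite subUset sub1set SA (subsetP (subsetDl A S)).
split.
  have -> : A :\: (j |: S) = (A :\: S) :\ j by rewrite setDDl setUC.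
  suff -> : #|(A :\: S) :\ j| = #|(A :\ a) :\: S| by [].
  by apply/eqP; rewrite -eqSS -card_unserved (cardsD1 j (A :\: S)) jrest.
rewrite big_setU1 //= sumA mulrDr EFinD leeD //.
by apply: le_trans (distW_le _ wW) _; rewrite lee_fin.
Qed.

Lemma UPRF_prop_fair (alpha : R) :
  0 < alpha -> 3 * alpha + 2 <= alpha ^+ 2 -> prop_fair d k loc cl alpha W.
Proof.
move=> alpha_gt0 alpha_big [N' [c [N'_big _ c_better]]].
have /set0Pn[i0 N'i0] : N' != set0.
  by rewrite -card_gt0 -(ltr0n R); exact: lt_le_trans UPRF_quota_gt0 N'_big.
have [a N'a a_far] :=
  @arg_maxP _ _ _ i0 (fun i => i \in N') (fun i => d (loc i) (cl c)) N'i0.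
have [w wW [j N'j jw]] := UPRF_ball N'_big a_far.
have w_worse i : i \in N' -> alpha * d (loc i) (cl c) < d (loc i) (cl w).
  by move=> iN'; rewrite -lte_fin; exact: lt_le_trans (c_better i iN') (distW_le _ wW).
have := w_worse a N'a; have := w_worse j N'j.
have := d_triangle (loc a) (cl c) (cl w); have := d_triangle (cl c) (loc j) (cl w).
rewrite (d_sym (cl c) (loc j)).
have := d_ge0 (loc a) (cl c); have := d_ge0 (loc j) (cl c).
(* With r = d(a, c) and x = d(j, c): alpha r < 3r + x and alpha x < 2r, hence
   alpha^2 r < 3 alpha r + 2r. *)
rewrite expr2 in alpha_big; nra.
Qed.

Lemma UPRF_indiv_fair : indiv_fair d k loc cl 3 W.
Proof.
move=> i r [ball_i_big _].
have near_i j : j \in [set j | d (loc i) (loc j) <= r] -> d (loc j) (loc i) <= r.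
  by rewrite inE d_sym.
have [w wW [j ball_j jw]] := UPRF_ball ball_i_big near_i.
apply: (le_trans (distW_le _ wW)); rewrite lee_fin.
move: ball_j; rewrite inE => ij; have := d_triangle (loc i) (loc j) (cl w); lra.
Qed.

Lemma UPRF_transf_core (gamma : R) :
  1 < gamma -> transf_core d k loc cl gamma (3 * gamma / (gamma - 1)) W.
Proof.
move=> gamma_gt1 [N' [c [N'_big _ c_better]]].
set S := \sum_(i in N') d (loc i) (cl c) in c_better.
have scale_gt0 : 0 < quota * (gamma - 1).
  by rewrite mulr_gt0 ?subr_gt0 ?UPRF_quota_gt0.
pose tau := S / (quota * (gamma - 1)).
have S_eq : S = quota * (gamma - 1) * tau by rewrite mulrC divfK ?gt_eqF.
have S_le : S <= quota * (gamma - 1) * tau by rewrite -S_eq.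
have tau_ge0 : 0 <= tau by rewrite divr_ge0 ?sumr_ge0 ?ltW.
pose near := [set i in N' | d (loc i) (cl c) <= tau].
have near_big : quota <= #|near|%:R.
  have := markov_card_le (ltW scale_gt0) tau_ge0 (fun i _ => d_ge0 _ _) S_le.
  by rewrite -mulrA in N'_big; lra.
have near_c i : i \in near -> d (loc i) (cl c) <= tau by rewrite inE => /andP[].
have [w0 w0W [j0 near_j0 j0w0]] := UPRF_ball near_big near_c.
have via_w0 i : d (loc i) (cl w0) <= d (loc i) (cl c) + 3 * tau.
  have := near_c j0 near_j0; have := d_triangle (loc i) (cl c) (cl w0).
  have := d_triangle (cl c) (loc j0) (cl w0); rewrite (d_sym (cl c) (loc j0)); lra.
have [Sv SvN' [unserved_small Sv_cost]] := UPRF_greedy_cover (cl c) N'.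
have cost_le : (\sum_(i in N') distW i <=
    (2 * S + \sum_(i in N' :\: Sv) (d (loc i) (cl c) + 3 * tau))%:E)%E.
  rewrite (big_setID Sv) /= (setIidPr SvN') EFinD leeD // -sumEFin.
  by apply: lee_sum => i _; apply: le_trans (distW_le _ w0W) _; rewrite lee_fin.
have unserved_cost :
    \sum_(i in N' :\: Sv) (d (loc i) (cl c) + 3 * tau) <= S + 3 * tau * quota.
  rewrite big_split /= sumr_const lerD ?ler_sum_subset ?subsetDl //.
  by rewrite -[leLHS]mulr_natr; apply: ler_wpM2l; [exact: mulr_ge0 | exact: ltW].
have alpha_S : 3 * gamma / (gamma - 1) * S = 3 * S + 3 * tau * quota.
  have gamma1_neq0 : gamma - 1 != 0 by rewrite subr_eq0 gt_eqF.
  by rewrite S_eq; move: quota => q; field.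
have := lt_le_trans c_better cost_le; rewrite lte_fin alpha_S; lra.
Qed.

End UPRF.

Lemma sqrt17_ratio_sqr (R : rcfType) :
  ((3 + Num.sqrt 17) / 2) ^+ 2 = 3 * ((3 + Num.sqrt 17) / 2) + 2 :> R.
Proof. have s17 : Num.sqrt 17 ^+ 2 = 17 :> R by rewrite sqr_sqrtr. lra. Qed.

Theorem theorem6 (R : realType) (X : Type) (d : X -> X -> R)
  (n k : nat) (Cand : finType) (loc : 'I_n -> X) (cl : Cand -> X)
  (W : {set Cand}) :
  is_metric d -> (0 < k)%N -> (#|W| <= k)%N ->
  UPRF d k loc cl W ->
  [/\ prop_fair d k loc cl ((3 + Num.sqrt 17) / 2) W,
      ((forall i : 'I_n, exists c : Cand, cl c = loc i) ->
         indiv_fair d k loc cl 3 W) &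
      (forall gamma : R, 1 < gamma ->
         transf_core d k loc cl gamma (3 * gamma / (gamma - 1)) W)].
Proof.
move=> d_metric _ _ W_UPRF; split.
- apply: UPRF_prop_fair => //; last by rewrite sqrt17_ratio_sqr.
  by rewrite divr_gt0 // ltr_wpDr ?sqrtr_ge0.
- by move=> _; exact: UPRF_indiv_fair.
- by move=> gamma; exact: UPRF_transf_core.
Qed.
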